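(* Let $f_1 \in \mathcal{F}_{\mu_1,L_1}(\mathbb{R}^d)$ and $f_2 \in \mathcal{F}_{\mu_2,L_2}(\mathbb{R}^d)$ with $\mu_1 \in [0,\infty)$, $L_1 \in (\mu_1,\infty]$, $\mu_2 \in \mathbb{R}$, $L_2 \in (\mu_2,\infty]$, such that $F = f_1 - f_2$ is bounded below, $\emptyset \ne \operatorname{dom}\partial f_1 \subseteq \operatorname{dom}\partial f_2$ and $\operatorname{range}\partial f_2 \subseteq \operatorname{range}\partial f_1$. Assume at least one of $f_1, f_2$ is smooth (i.e. $L_1<\infty$ or $L_2<\infty$), and assume $\mu_1 + \mu_2 > 0$ or $\mu_1 = \mu_2 = 0$. Let $x \in \operatorname{dom}\partial f_1$, let $g_2 \in \partial f_2(x)$ be the subgradient selected in one DCA iteration and $x^+ \in \operatorname{argmin}_w\{f_1(w) - \langle g_2, w\rangle\}$ the resulting point, so that $g_1^+ := g_2 \in \partial f_1(x^+)$. Let $g_1 \in \partial f_1(x)$ and $g_2^+ \in \partial f_2(x^+)$ be arbitrary. Set $B := \mu_1^{-1} + \mu_2^{-1} + L_2^{-1}$ and $E := \frac{L_2+\mu_2}{L_1 L_2}\cdot\frac{L_2 - L_1}{-\mu_2} + \mu_1^{-1} - L_1^{-1}$. Then for each $i \in \{1,\dots,6\}$ such that the parameters lie in the domain $D_i$ below, $$F(x) - F(x^+) \ge \sigma_i \tfrac12 \|g_1 - g_2\|^2 + \sigma_i^+ \tfrac12 \|g_1^+ - g_2^+\|^2,$$ with $\sigma_i, \sigma_i^+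 \ge 0$ given by: (1) $\sigma_1 = L_2^{-1}\frac{L_2-\mu_1}{L_1-\mu_1}$, $\sigma_1^+ = L_2^{-1}\Big(1 + \frac{L_2^{-1} - L_1^{-1}}{\mu_1^{-1} - L_1^{-1}}\Big)$; $D_1$: $L_1 \ge L_2 \ge \mu_1 \ge 0$, $L_1 > \mu_2$, and either $\mu_2 \ge 0$, or $\mu_2 < 0$ and $E \le 0$. (2) $\sigma_2 = L_1^{-1}\Big(1 + \frac{L_1^{-1} - L_2^{-1}}{\mu_2^{-1} - L_2^{-1}}\Big)$, $\sigma_2^+ = L_1^{-1}\frac{L_1-\mu_2}{L_2-\mu_2}$; $D_2$: $L_2 \ge L_1 \ge \mu_2 \ge 0$, $L_2 > \mu_1$, $\mu_1 \ge 0$. (3) $\sigma_3 = \frac{L_1^{-1} B}{B - L_1^{-1}}$, $\sigma_3^+ = \frac{1}{L_2+\mu_2}$; $D_3$: $\mu_2<0$, $\mu_1>0$, $L_2>\mu_1$, $L_1>\mu_2$, $B \le 0$, and either ($L_1 \ge L_2$ and $E \ge 0$) or $L_2 > L_1$. (4) $\sigma_4 = 0$, $\sigma_4^+ = \frac{\mu_1+\mu_2}{\mu_2^2}$; $D_4$: $\mu_2<0$, $\mu_1>0$, $L_1>\mu_2$, and either ($B>0$ and $L_2 > \mu_1$), or ($B>0$ and $0<L_2 \le \mu_1$), or ($B \le 0$ and $L_2 \le 0$). (5) $\sigma_5 = 0$, $\sigma_5^+ = \frac{L_2+\mu_1}{L_2^2}$; $D_5$: $L_1 > \mu_1 \ge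 L_2 > 0$, $L_1 > \mu_2$, and either $\mu_2 \ge 0$, or $\mu_2<0$ and $B \le 0$. (6) $\sigma_6 = \frac{L_1+\mu_2}{L_1^2}$, $\sigma_6^+ = 0$; $D_6$: $L_2 > \mu_2 \ge L_1 > \mu_1 \ge 0$.
   Context: For $\mu \in \mathbb{R}$ and $L \in (\mu,\infty]$, $\mathcal{F}_{\mu,L}(\mathbb{R}^d)$ is the class of proper lower semicontinuous $f:\mathbb{R}^d\to\mathbb{R}$ with $f - \frac{\mu}{2}\|\cdot\|^2$ convex and, if $L<\infty$, $\frac{L}{2}\|\cdot\|^2 - f$ convex (no upper condition when $L = \infty$); $L$ may be nonpositive. For such $f$, $\partial f(x) = \{g + \mu x : g \in \partial(f - \frac{\mu}{2}\|\cdot\|^2)(x)\}$ with the convex subdifferential; $\partial f(x) = \{\nabla f(x)\}$ where $f$ is differentiable. $\operatorname{dom}\partial f = \{x : \partial f(x)\neq\emptyset\}$, $\operatorname{range}\partial f = \bigcup_x \partial f(x)$. A function is smooth if it is differentiable with Lipschitz gradient (here: its upper curvature $L$ is finite). Conventions: $1/\infty = 0$, and expressions involving an infinite parameter are understood as their limits. *)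

From HB Require Import structures.
From mathcomp Require Import all_boot all_order all_algebra.
From mathcomp Require Import all_classical all_reals all_analysis.
Set Implicit Arguments. Unset Strict Implicit. Unset Printing Implicit Defensive.
Import Order.TTheory GRing.Theory Num.Theory.
Import numFieldNormedType.Exports.
Local Open Scope ring_scope.

Section Defs.
Variables (R : realType) (d : nat).
Notation V := 'rV[R]_d.

Definition dotv (u v : V) : R := \sum_(i < d) u 0 i * v 0 i.
Definition sqnorm (u : V) : R := dotv u u.

Definition convexf (h : V -> R) : Prop :=
  forall (x y : V) (t : R), 0 <= t <= 1 ->
    h (t *: x + (1 - t) *: y) <= t * h x + (1 - t) * h y.

(* The class F_{mu,L}(R^d); L = +oo means "no upper condition".
   f : R^d -> R is real valued, hence proper. *)
Definition inF (mu : R) (L : \bar R) (f : V -> R) : Prop :=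
  [/\ lower_semicontinuous (fun x => (f x)%:E),
      convexf (fun x => f x - mu / 2 * sqnorm x),
      (mu%:E < L)%E
    & forall L' : R, L = L'%:E -> convexf (fun x => L' / 2 * sqnorm x - f x)].

(* g \in \partial f(x) for f in F_{mu,L}:
   g = g' + mu x with g' in the convex subdifferential of f - mu/2 ||.||^2 *)
Definition subdiff (mu : R) (f : V -> R) (x g : V) : Prop :=
  forall y : V, f x - mu / 2 * sqnorm x + dotv (g - mu *: x) (y - x)
                <= f y - mu / 2 * sqnorm y.

End Defs.

Section Constants.
Variable R : realType.
Local Open Scope ring_scope.

Definition einv (L : \bar R) : R :=
  match L with r%:E => r^-1 | _ => 0 end.

(* B := mu1^-1 + mu2^-1 + L2^-1.  Only used when mu1 > 0 and mu2 < 0.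
   At L2 = 0 (possible only in D4, third alternative, where L2 <= 0) we take the
   limit L2 -> 0^-, i.e. B = -oo. *)
Definition Bc (mu1 mu2 : R) (L2 : \bar R) : \bar R :=
  if L2 == 0%E then -oo%E else (mu1^-1 + mu2^-1 + einv L2)%:E.

(* E := (L2+mu2)/(L1 L2) * (L2-L1)/(-mu2) + mu1^-1 - L1^-1, only used when
   mu2 < 0 and L2 > 0.  Infinite parameters: value = limit.
   mu1 = 0 gives mu1^-1 = +oo, hence E = +oo.  The case L1 = L2 = +oo is
   excluded by the smoothness assumption (arbitrary value). *)
Definition Ec (mu1 mu2 : R) (L1 L2 : \bar R) : \bar R :=
  if mu1 == 0 then +oo%E else
  match L1, L2 with
  | r1%:E, r2%:E =>
      ((r2 + mu2) / (r1 * r2) * ((r2 - r1) / (- mu2)) + mu1^-1 - r1^-1)%:E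
  | +oo%E, r2%:E => ((r2 + mu2) / (r2 * mu2) + mu1^-1)%:E
  | r1%:E, +oo%E => +oo%E (* limit L2 -> oo, as mu2 < 0 *)
  | _, _ => +oo%E
  end.

Definition sigma1 (mu1 : R) (L1 L2 : \bar R) : R :=
  match L1, L2 with
  | r1%:E, r2%:E => r2^-1 * ((r2 - mu1) / (r1 - mu1))
  | +oo%E, r2%:E => 0
  | r1%:E, +oo%E => (r1 - mu1)^-1
  | _, _ => 0
  end.
(* sigma_1^+ = L2^-1 (1 + (L2^-1 - L1^-1)/(mu1^-1 - L1^-1)), mu1^-1 = +oo if mu1 = 0 *)
Definition sigma1p (mu1 : R) (L1 L2 : \bar R) : R :=
  if mu1 == 0 then einv L2
  else einv L2 * (1 + (einv L2 - einv L1) / (mu1^-1 - einv L1)).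

(* sigma_2 = L1^-1 (1 + (L1^-1 - L2^-1)/(mu2^-1 - L2^-1)), mu2^-1 = +oo if mu2 = 0 *)
Definition sigma2 (mu2 : R) (L1 L2 : \bar R) : R :=
  if mu2 == 0 then einv L1
  else einv L1 * (1 + (einv L1 - einv L2) / (mu2^-1 - einv L2)).
Definition sigma2p (mu2 : R) (L1 L2 : \bar R) : R :=
  match L1, L2 with
  | r1%:E, r2%:E => r1^-1 * ((r1 - mu2) / (r2 - mu2))
  | r1%:E, +oo%E => 0
  | +oo%E, r2%:E => (r2 - mu2)^-1
  | _, _ => 0
  end.

(* sigma_3 = L1^-1 B / (B - L1^-1) (B is finite on D3) *)
Definition sigma3 (mu1 mu2 : R) (L1 L2 : \bar R) : R :=
  let B := mu1^-1 + mu2^-1 + einv L2 in einv L1 * B / (B - einv L1).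
Definition sigma3p (mu2 : R) (L2 : \bar R) : R := einv (L2 + mu2%:E)%E.

Definition sigma4 : R := 0.
Definition sigma4p (mu1 mu2 : R) : R := (mu1 + mu2) / mu2 ^+ 2.

Definition sigma5 : R := 0.
(* sigma_5^+ = (L2+mu1)/L2^2 (limit 0 at L2 = +oo) *)
Definition sigma5p (mu1 : R) (L2 : \bar R) : R :=
  match L2 with r2%:E => (r2 + mu1) / r2 ^+ 2 | _ => 0 end.

(* sigma_6 = (L1+mu2)/L1^2 (limit 0 at L1 = +oo) *)
Definition sigma6 (mu2 : R) (L1 : \bar R) : R :=
  match L1 with r1%:E => (r1 + mu2) / r1 ^+ 2 | _ => 0 end.
Definition sigma6p : R := 0.

Local Open Scope ereal_scope.
Definition D1 (mu1 mu2 : R) (L1 L2 : \bar R) : Prop :=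
  [/\ L2 <= L1, mu1%:E <= L2, (0 <= mu1)%R, mu2%:E < L1
    & (0 <= mu2)%R \/ ((mu2 < 0)%R /\ Ec mu1 mu2 L1 L2 <= 0)].
Definition D2 (mu1 mu2 : R) (L1 L2 : \bar R) : Prop :=
  [/\ L1 <= L2, mu2%:E <= L1, (0 <= mu2)%R, mu1%:E < L2 & (0 <= mu1)%R].
Definition D3 (mu1 mu2 : R) (L1 L2 : \bar R) : Prop :=
  [/\ (mu2 < 0)%R, (0 < mu1)%R, mu1%:E < L2, mu2%:E < L1
    & Bc mu1 mu2 L2 <= 0 /\
      ((L2 <= L1 /\ 0 <= Ec mu1 mu2 L1 L2) \/ L1 < L2)].
Definition D4 (mu1 mu2 : R) (L1 L2 : \bar R) : Prop :=
  [/\ (mu2 < 0)%R, (0 < mu1)%R, mu2%:E < L1 &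
      [\/ 0 < Bc mu1 mu2 L2 /\ mu1%:E < L2,
          0 < Bc mu1 mu2 L2 /\ (0 < L2 /\ L2 <= mu1%:E)
        | Bc mu1 mu2 L2 <= 0 /\ L2 <= 0]].
Definition D5 (mu1 mu2 : R) (L1 L2 : \bar R) : Prop :=
  [/\ mu1%:E < L1, L2 <= mu1%:E, 0 < L2, mu2%:E < L1
    & (0 <= mu2)%R \/ ((mu2 < 0)%R /\ Bc mu1 mu2 L2 <= 0)].
Definition D6 (mu1 mu2 : R) (L1 L2 : \bar R) : Prop :=
  [/\ mu2%:E < L2, L1 <= mu2%:E, mu1%:E < L1 & (0 <= mu1)%R].

End Constants.

(* Each f in F_{mu,L} satisfies, between two points with subgradients g at x and
   h at y, the interpolation inequality
     f y >= f x + <g, y - x> + mu/2 |y - x|^2 + 1/(2 (L - mu)) |h - g - mu (y - x)|^2.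
   A DCA step makes g2 a subgradient of f1 at x+ as well as of f2 at x, so the four
   interpolation inequalities of f1 and f2 between x and x+ only involve g1, g2 and
   g2+, and the terms linear in g2 cancel when they are added up.  In each domain D_i
   a nonnegative combination of them, plus a positive semidefinite quadratic form,
   yields F(x) - F(x+) >= sigma_i/2 |g1 - g2|^2 + sigma_i^+/2 |g1+ - g2+|^2; finding
   the multipliers is a scalar problem, solved case by case. *)

From HB Require Import structures.
From mathcomp Require Import all_boot all_order all_algebra.
From mathcomp Require Import all_classical all_reals all_analysis.
From mathcomp Require Import ring lra.
Set Implicit Arguments. Unset Strict Implicit. Unset Printing Implicit Defensive.
Import Order.TTheory GRing.Theory Num.Theory.
Import numFieldNormedType.Exports.
Local Open Scope ring_scope.

Ltac coordinatewise :=
  rewrite /sqnorm /dotv ?mulr_sumr -?sumrN -?big_split /=;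
  apply: eq_bigr => i _; rewrite !mxE; ring.

Ltac field_lra := field; repeat (apply/andP; split);
  first [ done | apply: lt0r_neq0; lra | apply: ltr0_neq0; lra
        | apply: lt0r_neq0; nra | apply: ltr0_neq0; nra ].

Lemma ler_of_linear_slack (R : realFieldType) (X Y c : R) :
  (forall t, 0 < t -> t < 1 -> X <= Y + c * t) -> X <= Y.
Proof.
move=> slack; apply/ler_addgt0Pr => e e_gt0.
have [c_le0|c_gt0] := lerP c 0.
  have := slack 2^-1 ltac:(lra) ltac:(lra).
  have : c * 2^-1 <= 0 by rewrite pmulr_lle0.
  lra.
have ec_gt0 : 0 < e + c by lra.
have t_gt0 : 0 < e / (e + c) by rewrite divr_gt0.
have t_lt1 : e / (e + c) < 1 by rewrite ltr_pdivrMr // mul1r; lra.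
have := slack _ t_gt0 t_lt1.
have : c * (e / (e + c)) <= e by rewrite mulrA ler_pdivrMr //; nra.
lra.
Qed.

Section Interpolation.
Variables (R : realType) (d : nat).
Local Notation V := 'rV[R]_d.
Implicit Types (u v w x y z g h : V).

Lemma sqnormB_sym u v : sqnorm (u - v) = sqnorm (v - u).
Proof. by coordinatewise. Qed.

Lemma sqnorm_ge0 u : 0 <= sqnorm u.
Proof. by apply: sumr_ge0 => i _; rewrite -expr2 sqr_ge0. Qed.

Lemma quadratic_upper_bound (K : R) (f : V -> R) y g :
  convexf (fun w => K / 2 * sqnorm w - f w) ->
  (forall z, f y + dotv g (z - y) <= f z) ->
  forall z, f z <= f y + dotv g (z - y) + K / 2 * sqnorm (z - y).
Proof.
move=> cvx sub z; set v := z - y.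
have zE : z = y + v by rewrite /v addrC subrK.
apply: (@ler_of_linear_slack _ _ _ (K / 2 * sqnorm v)) => t t_gt0 t_lt1.
have t1_gt0 : 0 < 1 + t by lra.
have wt : 0 <= (1 + t)^-1 <= 1.
  by apply/andP; split; [rewrite invr_ge0; lra | rewrite invf_le1; lra].
have := cvx (y - t *: v) z _ wt.
have -> : (1 + t)^-1 *: (y - t *: v) + (1 - (1 + t)^-1) *: z = y.
  by rewrite zE; apply/rowP => i; rewrite !mxE; field_lra.
have E1 : sqnorm (y - t *: v) = sqnorm y - 2 * t * dotv y v + t ^+ 2 * sqnorm v.
  by coordinatewise.
have E2 : sqnorm z = sqnorm y + 2 * dotv y v + sqnorm v by rewrite zE; coordinatewise.
have E3 : dotv g (y - t *: v - y) = - (t * dotv g v) by coordinatewise.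
have sub_t := sub (y - t *: v); rewrite E3 in sub_t.
rewrite E1 E2 => /(ler_wpM2l (ltW t1_gt0)).
have -> a b : (1 + t) * ((1 + t)^-1 * a + (1 - (1 + t)^-1) * b) = a + t * b.
  by field_lra.
move=> cvx_t; rewrite -subr_ge0 -(pmulr_rge0 _ t_gt0).
lra.
Qed.

Lemma smooth_convex_interpolation (K : R) (f : V -> R) x y g h : 0 < K ->
  (forall z, f x + dotv g (z - x) <= f z) ->
  (forall z, f z <= f y + dotv h (z - y) + K / 2 * sqnorm (z - y)) ->
  f x + dotv g (y - x) + K^-1 / 2 * sqnorm (h - g) <= f y.
Proof.
move=> K_gt0 sub_x upper_y.
set z := y - K^-1 *: (h - g).
have := sub_x z; have := upper_y z.
have E1 : dotv g (z - x) = dotv g (y - x) - K^-1 * dotv g (h - g) by coordinatewise.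
have E2 : dotv h (z - y) = - (K^-1 * dotv h (h - g)) by coordinatewise.
have E3 : K / 2 * sqnorm (z - y) = K^-1 / 2 * sqnorm (h - g).
  rewrite /z /sqnorm /dotv !mulr_sumr; apply: eq_bigr => i _; rewrite !mxE.
  by field_lra.
have E4 : K^-1 * sqnorm (h - g) = K^-1 * dotv h (h - g) - K^-1 * dotv g (h - g).
  by coordinatewise.
rewrite E1 E2 E3; lra.
Qed.

Lemma inF_interpolation mu L (f : V -> R) x y g h :
  inF mu L f -> subdiff mu f x g -> subdiff mu f y h ->
  f x + dotv g (y - x) + mu / 2 * sqnorm (y - x)
    + einv (L - mu%:E)%E / 2 * sqnorm (h - g - mu *: (y - x)) <= f y.
Proof.
case=> _ _ mu_lt_L upper sub_x sub_y.
pose f0 w := f w - mu / 2 * sqnorm w.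
have shifted : f0 x + dotv (g - mu *: x) (y - x)
    + einv (L - mu%:E)%E / 2 * sqnorm ((h - mu *: y) - (g - mu *: x)) <= f0 y.
  move: mu_lt_L upper; case: L => [l| |] //= mu_lt_l upper; last first.
    by have := sub_x y; rewrite /f0; lra.
  have lmu_gt0 : 0 < l - mu by rewrite subr_gt0 -lte_fin.
  apply: smooth_convex_interpolation => // z.
  apply: quadratic_upper_bound => [a b t wt|w]; last exact: sub_y.
  have E w : (l - mu) / 2 * sqnorm w - f0 w = l / 2 * sqnorm w - f w.
    by rewrite /f0; field.
  by rewrite !E; apply: upper.
have E1 : sqnorm y = sqnorm x + 2 * dotv x (y - x) + sqnorm (y - x) by coordinatewise.
have E2 : dotv (g - mu *: x) (y - x) = dotv g (y - x) - mu * dotv x (y - x).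
  by coordinatewise.
have E3 : (h - mu *: y) - (g - mu *: x) = h - g - mu *: (y - x).
  by apply/rowP => i; rewrite !mxE; ring.
move: shifted; rewrite /f0 E1 E2 E3; lra.
Qed.

Lemma subdiff_of_argmin mu L (f : V -> R) x g :
  inF mu L f -> (forall w, f x - dotv g x <= f w - dotv g w) -> subdiff mu f x g.
Proof.
case=> _ cvx _ _ argmin y; set v := y - x.
have yE : y = x + v by rewrite /v addrC subrK.
apply: (@ler_of_linear_slack _ _ _ (mu / 2 * sqnorm v)) => t t_gt0 t_lt1.
have wt : 0 <= t <= 1 by apply/andP; split; lra.
have := cvx y x t wt; have := argmin (t *: y + (1 - t) *: x).
have -> : t *: y + (1 - t) *: x = x + t *: v.
  by rewrite yE; apply/rowP => i; rewrite !mxE; ring.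
have E1 : sqnorm (x + t *: v) = sqnorm x + 2 * t * dotv x v + t ^+ 2 * sqnorm v.
  by coordinatewise.
have E2 : dotv g (x + t *: v) = dotv g x + t * dotv g v by coordinatewise.
have E3 : sqnorm y = sqnorm x + 2 * dotv x v + sqnorm v by rewrite yE; coordinatewise.
have E4 : dotv (g - mu *: x) (y - x) = dotv g v - mu * dotv x v by coordinatewise.
rewrite E1 E2 E3 E4 => min_t cvx_t.
rewrite -subr_ge0 -(pmulr_rge0 _ t_gt0).
lra.
Qed.

Lemma quadform_ge0 (A b k : R) u v : 0 <= A -> 0 <= k -> b ^+ 2 <= k * A ->
  0 <= A * sqnorm u - 2 * b * dotv u v + k * sqnorm v.
Proof.
move=> A_ge0 k_ge0 discr.
have v_ge0 := sqnorm_ge0 v.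
have [A0|A_neq0] := eqVneq A 0.
  have b0 : b = 0.
    by apply/eqP; rewrite -sqrf_eq0 eq_le sqr_ge0 andbT; rewrite A0 mulr0 in discr.
  by rewrite A0 b0; have := mulr_ge0 k_ge0 v_ge0; lra.
have A_gt0 : 0 < A by rewrite lt_def A_neq0.
rewrite -(pmulr_rge0 _ A_gt0).
have := sqnorm_ge0 (A *: u - b *: v).
have -> : sqnorm (A *: u - b *: v)
    = A ^+ 2 * sqnorm u - 2 * A * b * dotv u v + b ^+ 2 * sqnorm v by coordinatewise.
have discr_ge0 : 0 <= k * A - b ^+ 2 by lra.
have := mulr_ge0 discr_ge0 v_ge0.
nra.
Qed.

End Interpolation.

(* Weighting the two interpolation inequalities of f between a and b by [1 + lam]
   and [lam] bounds [f a - f b - <h, D> - s/2 |g - h|^2] from below by half of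
   [A |U|^2 - 2 (lam + s mu) <U, D> + (mu - s mu^2) |D|^2], where [D = a - b],
   [U = g - h - mu D] and [A = (1 + 2 lam) p - s]; the conditions make this form at
   least [c |D|^2]. *)
Definition descent_cert (R : realType) (mu p s c : R) : Prop :=
  exists lam k, [/\ 0 <= lam, 0 <= k, 0 <= (1 + 2 * lam) * p - s,
    (lam + s * mu) ^+ 2 <= k * ((1 + 2 * lam) * p - s) & c + k <= mu - s * mu ^+ 2].

(* [c1] and [c2] are the curvatures left on [|x - x+|^2] by [f1] and [f2]. *)
Definition certified (R : realType) (mu1 mu2 : R) (L1 L2 : \bar R) (s sp : R) : Prop :=
  [/\ 0 <= s, 0 <= sp & exists c1 c2,
    [/\ descent_cert mu1 (einv (L1 - mu1%:E)%E) s c1,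
        descent_cert mu2 (einv (L2 - mu2%:E)%E) sp c2 & 0 <= c1 + c2]].

Section Gap.
Variables (R : realType) (d : nat).
Local Notation V := 'rV[R]_d.

Lemma inF_gap mu L (f : V -> R) a b g h s c :
  inF mu L f -> subdiff mu f a g -> subdiff mu f b h ->
  descent_cert mu (einv (L - mu%:E)%E) s c ->
  dotv h (a - b) + c / 2 * sqnorm (a - b) + s / 2 * sqnorm (g - h) <= f a - f b.
Proof.
move=> fF sub_a sub_b [lam [k [lam_ge0 k_ge0 A_ge0 discr c_le]]].
have I1 := inF_interpolation fF sub_b sub_a.
have I2 := inF_interpolation fF sub_a sub_b.
set p := einv _ in A_ge0 discr I1 I2.
have lam1_ge0 : 0 <= 1 + lam by lra.
have {I1}I1 := ler_wpM2l lam1_ge0 I1; have {I2}I2 := ler_wpM2l lam_ge0 I2.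
have Q := quadform_ge0 (g - h - mu *: (a - b)) (a - b) A_ge0 k_ge0 discr.
have slack_ge0 : 0 <= mu - s * mu ^+ 2 - k - c by lra.
have D_ge0 := mulr_ge0 slack_ge0 (sqnorm_ge0 (a - b)).
set D := a - b in I1 I2 Q D_ge0 *; set U := g - h - mu *: D in I1 Q *.
have E1 : sqnorm (b - a) = sqnorm D by rewrite sqnormB_sym.
have E2 : sqnorm (h - g - mu *: (b - a)) = sqnorm U by rewrite /U /D; coordinatewise.
have E3 : dotv g (b - a) = - dotv U D - dotv h D - mu * sqnorm D.
  by rewrite /U /D; coordinatewise.
have E4 : sqnorm (g - h) = sqnorm U + 2 * mu * dotv U D + mu ^+ 2 * sqnorm D.
  by rewrite /U; coordinatewise.
rewrite E1 E2 E3 in I2; rewrite E4.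
lra.
Qed.

Lemma certified_dca_step mu1 mu2 L1 L2 (f1 f2 : V -> R) x xp g1 g2 g2p s sp :
  inF mu1 L1 f1 -> inF mu2 L2 f2 ->
  subdiff mu1 f1 x g1 -> subdiff mu1 f1 xp g2 ->
  subdiff mu2 f2 x g2 -> subdiff mu2 f2 xp g2p ->
  certified mu1 mu2 L1 L2 s sp ->
  s * 2^-1 * sqnorm (g1 - g2) + sp * 2^-1 * sqnorm (g2 - g2p)
    <= (f1 x - f2 x) - (f1 xp - f2 xp).
Proof.
move=> f1F f2F sub1x sub1xp sub2x sub2xp [_ _ [c1 [c2 [cert1 cert2 c_ge0]]]].
have gap1 := inF_gap f1F sub1x sub1xp cert1.
have gap2 := inF_gap f2F sub2xp sub2x cert2.
have E1 : dotv g2 (xp - x) = - dotv g2 (x - xp) by coordinatewise.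
have D_ge0 := mulr_ge0 c_ge0 (sqnorm_ge0 (x - xp)).
rewrite E1 sqnormB_sym [sqnorm (g2p - g2)]sqnormB_sym in gap2.
lra.
Qed.
End Gap.

Section Certificates.
Variable R : realType.
Implicit Types (mu nu l p s c : R) (L M : \bar R).

(* For [s = p] the weight [k] is [0 / 0 = 0]. *)
Lemma descent_cert_lam0 mu p s : 0 <= s <= p -> s < p \/ s * mu = 0 ->
  descent_cert mu p s (mu - s * mu ^+ 2 - (s * mu) ^+ 2 / (p - s)).
Proof.
case/andP=> s_ge0 s_le_p lt_or_flat.
have kE : (s * mu) ^+ 2 / (p - s) * (p - s) = (s * mu) ^+ 2.
  case: lt_or_flat => [s_lt_p|->]; last by rewrite expr0n !mul0r.
  by rewrite mulfVK // subr_eq0 gt_eqF.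
exists 0, ((s * mu) ^+ 2 / (p - s)).
rewrite add0r mulr0 addr0 mul1r kE; split => //; try lra.
by rewrite divr_ge0 ?sqr_ge0 ?subr_ge0.
Qed.

Lemma descent_cert_flat mu p s : 0 <= s <= p -> s * mu = 0 -> descent_cert mu p s mu.
Proof.
move=> s_range flat; have := descent_cert_lam0 s_range (or_intror flat).
by rewrite flat expr0n mul0r subr0 expr2 mulrA flat mul0r subr0.
Qed.

Lemma descent_cert_smooth mu l s : mu < l -> 1 <= s * l -> 1 <= s * (l + mu) ->
  descent_cert mu (l - mu)^-1 s (l - s * l ^+ 2).
Proof.
move=> mu_lt_l sl_ge1 slmu_ge1; have lmu_gt0 : 0 < l - mu by lra.
have AE : (1 + 2 * (s * l - 1)) * (l - mu)^-1 - s = (s * (l + mu) - 1) / (l - mu).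
  by field_lra.
exists (s * l - 1), ((l - mu) * (s * (l + mu) - 1)); rewrite AE; split; try lra.
- by rewrite mulr_ge0 //; lra.
- by rewrite divr_ge0 //; lra.
- have -> : s * l - 1 + s * mu = s * (l + mu) - 1 by ring.
  suff -> : (l - mu) * (s * (l + mu) - 1) * ((s * (l + mu) - 1) / (l - mu))
    = (s * (l + mu) - 1) ^+ 2 by [].
  by field_lra.
Qed.

Lemma descent_cert_npos mu p s : mu <= 0 -> 0 <= s -> s <= (1 - 2 * (s * mu)) * p ->
  descent_cert mu p s (mu - s * mu ^+ 2).
Proof.
move=> mu_le0 s_ge0 s_le; exists (- (s * mu)), 0; split; try lra.
by rewrite oppr_ge0 mulr_ge0_le0.
Qed.

Lemma descent_cert_le mu p s c c' :
  c' <= c -> descent_cert mu p s c -> descent_cert mu p s c'.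
Proof.
by move=> c'_le [lam [k [? ? ? ? c_le]]]; exists lam, k; split=> //; lra.
Qed.

Lemma certifiedC mu1 mu2 L1 L2 s sp :
  certified mu1 mu2 L1 L2 s sp -> certified mu2 mu1 L2 L1 sp s.
Proof.
case=> s_ge0 sp_ge0 [c1 [c2 [cert1 cert2 c_ge0]]].
by split=> //; exists c2, c1; rewrite [c2 + c1]addrC.
Qed.

Lemma einv_shift_ge0 mu L : (mu%:E < L)%E -> 0 <= einv (L - mu%:E)%E.
Proof. by case: L => [l| |] //=; rewrite lte_fin invr_ge0 subr_ge0 => /ltW. Qed.

Lemma einv_ge0 M : (0 <= M)%E -> 0 <= einv M.
Proof. by case: M => [m| |] //=; rewrite lee_fin invr_ge0. Qed.

Lemma mul_einv_le1 l M : 0 < l -> (l%:E <= M)%E -> l * einv M <= 1.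
Proof.
case: M => [m| |] //=; rewrite ?mulr0 // lee_fin => l_gt0 l_le_m.
by rewrite ler_pdivrMr ?mul1r //; lra.
Qed.

Lemma mul_einv_lt1 nu M : (0 < M)%E -> (nu%:E < M)%E -> nu * einv M < 1.
Proof.
case: M => [m| |] //=; rewrite ?mulr0 // !lte_fin => m_gt0 nu_lt_m.
by rewrite ltr_pdivrMr ?mul1r.
Qed.

Lemma einv_shiftE nu M : (0 < M)%E -> (nu%:E < M)%E ->
  einv (M - nu%:E)%E = einv M / (1 - nu * einv M).
Proof.
case: M => [m| |] //=; rewrite ?mul0r // !lte_fin => m_gt0 nu_lt_m.
by field_lra.
Qed.

Lemma sigma2E nu l M : l != 0 -> nu * einv M < 1 ->
  sigma2 nu l%:E M = l^-1 + nu * (1 - l * einv M) / (l ^+ 2 * (1 - nu * einv M)).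
Proof.
rewrite /sigma2 /= => l_neq0 nuM_lt1.
have [->|nu_neq0] := eqVneq nu 0; first by rewrite !mul0r addr0.
by field_lra.
Qed.

Lemma sigma2pE nu l M : l != 0 -> (0 < M)%E -> (nu%:E < M)%E ->
  sigma2p nu l%:E M = einv M * (l - nu) / (l * (1 - nu * einv M)).
Proof.
case: M => [m| |] //=; rewrite ?mul0r // !lte_fin => l_neq0 m_gt0 nu_lt_m.
by field_lra.
Qed.

Lemma sigma1E mu L1 L2 : sigma1 mu L1 L2 = sigma2p mu L2 L1.
Proof. by case: L1 L2 => [?| |] [?| |]. Qed.

Lemma sigma1pE mu L1 L2 : sigma1p mu L1 L2 = sigma2 mu L2 L1.
Proof. by []. Qed.

Lemma certified_sigma2 mu nu l M : 0 < l -> mu < l -> 0 <= nu <= l ->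
  (l%:E <= M)%E -> (nu%:E < M)%E ->
  0 <= mu \/ 1 <= sigma2 nu l%:E M * (l + mu) ->
  certified mu nu l%:E M (sigma2 nu l%:E M) (sigma2p nu l%:E M).
Proof.
move=> l_gt0 mu_lt_l /andP[nu_ge0 nu_le_l] l_le_M nu_lt_M curv.
have M_gt0 : (0 < M)%E by apply: lt_le_trans l_le_M; rewrite lte_fin.
have a_ge0 := einv_ge0 (ltW M_gt0).
have la_le1 := mul_einv_le1 l_gt0 l_le_M.
have nua_lt1 := mul_einv_lt1 M_gt0 nu_lt_M.
(* Written in [a = 1/M], the weights are the same for finite and infinite [M]. *)
rewrite sigma2E ?gt_eqF // in curv *.
rewrite /certified sigma2pE ?gt_eqF // (einv_shiftE M_gt0 nu_lt_M) /=.
set a := einv M in a_ge0 la_le1 nua_lt1 curv *.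
set s := l^-1 + _ in curv *; set t := a * _ / _; set p := a / _.
have nua_gt0 : 0 < 1 - nu * a by lra.
have frac_ge0 : 0 <= nu * (1 - l * a) / (l * (1 - nu * a)).
  by rewrite divr_ge0 ?mulr_ge0 //; lra.
have sl_ge1 : 1 <= s * l.
  suff -> : s * l = 1 + nu * (1 - l * a) / (l * (1 - nu * a)) by lra.
  by rewrite /s; field_lra.
have s_ge0 : 0 <= s by rewrite -(pmulr_lge0 _ l_gt0); lra.
have t_ge0 : 0 <= t by rewrite /t !(divr_ge0, mulr_ge0) //; lra.
have ptE : p - t = a * nu / (l * (1 - nu * a)) by rewrite /p /t; field_lra.
have pt_ge0 : 0 <= p - t by rewrite ptE !(divr_ge0, mulr_ge0) //; lra.
have tnuE : t * nu = (l - nu) * (p - t) by rewrite ptE /t; field_lra.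
have cert1 : descent_cert mu (l - mu)^-1 s (l - s * l ^+ 2).
  apply: descent_cert_smooth => //; case: curv => // mu_ge0.
  by have := mulr_ge0 s_ge0 mu_ge0; rewrite mulrDr; lra.
have lt_or_flat : t < p \/ t * nu = 0.
  have [pt0|pt_neq0] := eqVneq (p - t) 0; first by right; rewrite tnuE pt0 mulr0.
  by left; rewrite -subr_gt0 lt_def pt_neq0.
have t_range : 0 <= t <= p by apply/andP; lra.
have cert2 := descent_cert_lam0 t_range lt_or_flat.
have sqr_divE : (t * nu) ^+ 2 / (p - t) = (l - nu) * (t * nu).
  rewrite tnuE; have [->|pt_neq0] := eqVneq (p - t) 0.
    by rewrite !mulr0 expr0n /= mul0r.
  by field_lra.
split=> //; exists (l - s * l ^+ 2), (nu - t * nu ^+ 2 - (t * nu) ^+ 2 / (p - t)).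
split=> //; rewrite sqr_divE.
have : l - s * l ^+ 2 + (nu - t * nu ^+ 2 - (l - nu) * (t * nu)) = 0.
  by rewrite /s /t; field_lra.
lra.
Qed.

Lemma sigma2_ge1_of_Ec_le0 mu1 mu2 l2 L1 : 0 < mu1 -> mu2 < 0 -> 0 < l2 ->
  (l2%:E <= L1)%E -> (mu1%:E < L1)%E -> (Ec mu1 mu2 L1 l2%:E <= 0)%E ->
  1 <= sigma2 mu1 l2%:E L1 * (l2 + mu2).
Proof.
move=> mu1_gt0 mu2_lt0 l2_gt0 l2_le_L1 mu1_lt_L1.
have L1_gt0 : (0 < L1)%E by apply: lt_le_trans l2_le_L1; rewrite lte_fin.
have a_ge0 := einv_ge0 (ltW L1_gt0).
have la_le1 := mul_einv_le1 l2_gt0 l2_le_L1.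
have mua_lt1 := mul_einv_lt1 L1_gt0 mu1_lt_L1.
have EcE : Ec mu1 mu2 L1 l2%:E
    = ((l2 + mu2) * (l2^-1 - einv L1) / mu2 + mu1^-1 - einv L1)%:E.
  rewrite /Ec gt_eqF //; case: L1 l2_le_L1 {L1_gt0 a_ge0 la_le1 mua_lt1 mu1_lt_L1}
    => [l1| |] //= l2_le_l1; congr (_%:E); rewrite ?lee_fin in l2_le_l1; field_lra.
rewrite EcE lee_fin sigma2E ?gt_eqF //.
set a := einv L1 in a_ge0 la_le1 mua_lt1 *; set E := _ + _ - a => E_le0.
have factor_le0 : mu1 * mu2 / (l2 * (1 - mu1 * a)) <= 0.
  by rewrite pmulr_lle0 ?invr_gt0 ?mulr_gt0 ?subr_gt0 // pmulr_rle0 // ltW.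
have -> : (l2^-1 + mu1 * (1 - l2 * a) / (l2 ^+ 2 * (1 - mu1 * a))) * (l2 + mu2)
    = 1 + E * (mu1 * mu2 / (l2 * (1 - mu1 * a))).
  by rewrite /E; field_lra.
by have := mulr_le0 E_le0 factor_le0; lra.
Qed.

Lemma certified_sigma6 mu nu l M : mu < l -> 0 < l <= nu -> (nu%:E < M)%E ->
  0 <= l * mu + l * nu + mu * nu -> certified mu nu l%:E M (sigma6 nu l%:E) 0.
Proof.
move=> mu_lt_l /andP[l_gt0 l_le_nu] nu_lt_M curv; rewrite /sigma6.
set s := (l + nu) / l ^+ 2.
have s_ge0 : 0 <= s by rewrite divr_ge0 ?sqr_ge0 //; lra.
have sl_ge1 : 1 <= s * l.
  suff -> : s * l = 1 + nu / l.
    by have := divr_ge0 (ltW (lt_le_trans l_gt0 l_le_nu)) (ltW l_gt0); lra.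
  by rewrite /s; field_lra.
have slmu_ge1 : 1 <= s * (l + mu).
  suff -> : s * (l + mu) = 1 + (l * mu + l * nu + mu * nu) / l ^+ 2.
    by have := divr_ge0 curv (sqr_ge0 l); lra.
  by rewrite /s; field_lra.
have cert1 := descent_cert_smooth mu_lt_l sl_ge1 slmu_ge1.
have cert2 : descent_cert nu (einv (M - nu%:E)%E) 0 nu.
  by apply: descent_cert_flat; rewrite ?mul0r ?lexx ?einv_shift_ge0.
split=> //; exists (l - s * l ^+ 2), nu; split=> //.
have -> : s * l ^+ 2 = l + nu by rewrite /s; field_lra.
lra.
Qed.

Lemma Bc_le0E mu1 mu2 l : 0 < mu1 -> mu2 < 0 -> 0 < l ->
  (Bc mu1 mu2 l%:E <= 0)%E = (0 <= l * mu1 + l * mu2 + mu1 * mu2).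
Proof.
move=> mu1_gt0 mu2_lt0 l_gt0; rewrite /Bc eqe gt_eqF //= lee_fin.
have -> : l * mu1 + l * mu2 + mu1 * mu2 = mu1 * mu2 * l * (mu1^-1 + mu2^-1 + l^-1).
  by field_lra.
have coef_lt0 : mu1 * mu2 * l < 0 by rewrite pmulr_llt0 // pmulr_rlt0.
by rewrite (nmulr_rge0 _ coef_lt0).
Qed.

Lemma descent_cert_sigma3 mu1 (B : R) L1 : 0 < mu1 -> (mu1%:E < L1)%E -> B <= 0 ->
  let s := einv L1 * B / (B - einv L1) in
  0 <= s /\ descent_cert mu1 (einv (L1 - mu1%:E)%E) s (mu1 - B * mu1 ^+ 2 / (B * mu1 - 1)).
Proof.
move=> mu1_gt0 mu1_lt_L1 B_le0.
have Bmu1_lt0 : B * mu1 - 1 < 0 by have := mulr_le0_ge0 B_le0 (ltW mu1_gt0); lra.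
have T_ge0 : 0 <= B * mu1 ^+ 2 / (B * mu1 - 1).
  rewrite -mulrNN -invrN divr_ge0 //; last by lra.
  by rewrite oppr_ge0 mulr_le0_ge0 ?sqr_ge0.
case: L1 mu1_lt_L1 => [l1| |] //=; rewrite ?lte_fin => mu1_lt_l1.
  have l1_gt0 : 0 < l1 by lra.
  have Bl1_lt0 : B * l1 - 1 < 0 by have := mulr_le0_ge0 B_le0 (ltW l1_gt0); lra.
  have -> : l1^-1 * B / (B - l1^-1) = - B / (1 - B * l1) by field_lra.
  set s := - B / (1 - B * l1).
  have s_ge0 : 0 <= s by rewrite divr_ge0 //; lra.
  have psE : (l1 - mu1)^-1 - s = (1 - B * mu1) / ((l1 - mu1) * (1 - B * l1)).
    by rewrite /s; field_lra.
  have s_lt_p : s < (l1 - mu1)^-1 by rewrite -subr_gt0 psE divr_gt0 ?mulr_gt0 //; lra.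
  have s_range : 0 <= s <= (l1 - mu1)^-1 by rewrite s_ge0 ltW.
  split=> //; have := descent_cert_lam0 (mu := mu1) s_range (or_introl s_lt_p).
  suff -> : mu1 - s * mu1 ^+ 2 - (s * mu1) ^+ 2 / ((l1 - mu1)^-1 - s)
    = mu1 - B * mu1 ^+ 2 / (B * mu1 - 1) by [].
  by rewrite psE /s; field_lra.
rewrite !mul0r; split=> //.
apply: descent_cert_le (descent_cert_flat _ (mul0r _)); first by lra.
by rewrite lexx.
Qed.

Lemma descent_cert_sigma3p mu1 mu2 L2 : 0 < mu1 -> mu2 < 0 -> 0 < mu1 + mu2 ->
  (mu1%:E < L2)%E -> (Bc mu1 mu2 L2 <= 0)%E ->
  let B := mu1^-1 + mu2^-1 + einv L2 in
  [/\ B <= 0, 0 <= einv (L2 + mu2%:E)%E &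
      descent_cert mu2 (einv (L2 - mu2%:E)%E) (einv (L2 + mu2%:E)%E)
        (B * mu1 ^+ 2 / (B * mu1 - 1) - mu1)].
Proof.
move=> mu1_gt0 mu2_lt0 mu_gt0; case: L2 => [l2| |] //=; rewrite ?lte_fin => mu1_lt_l2.
  have l2_gt0 : 0 < l2 by lra.
  move=> B_le0; have key := B_le0; rewrite Bc_le0E // in key.
  move: B_le0; rewrite /Bc eqe gt_eqF //= lee_fin => B_le0.
  have l2mu2_gt0 : 0 < l2 + mu2.
    by rewrite -(pmulr_lgt0 _ mu_gt0); nra.
  split=> //; first by rewrite invr_ge0 ltW.
  set B := mu1^-1 + mu2^-1 + l2^-1.
  have -> : B * mu1 ^+ 2 / (B * mu1 - 1) - mu1 = mu2 - (l2 + mu2)^-1 * mu2 ^+ 2.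
    by rewrite /B; field_lra.
  apply: descent_cert_npos; rewrite ?invr_ge0 ?(ltW mu2_lt0) ?(ltW l2mu2_gt0) //.
  suff -> : (1 - 2 * ((l2 + mu2)^-1 * mu2)) * (l2 - mu2)^-1 = (l2 + mu2)^-1 by [].
  by field_lra.
rewrite lee_fin addr0 => B_le0; split=> //.
have -> : (mu1^-1 + mu2^-1) * mu1 ^+ 2 / ((mu1^-1 + mu2^-1) * mu1 - 1) - mu1
    = mu2 - 0 * mu2 ^+ 2 by field_lra.
by apply: descent_cert_npos; rewrite ?mul0r ?mulr0 ?lexx // ltW.
Qed.

Lemma certified_D1 mu1 mu2 L1 L2 : (mu1%:E < L1)%E -> (mu2%:E < L2)%E ->
  (L1 < +oo \/ L2 < +oo)%E -> D1 mu1 mu2 L1 L2 ->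
  certified mu1 mu2 L1 L2 (sigma1 mu1 L1 L2) (sigma1p mu1 L1 L2).
Proof.
move=> mu1_lt_L1 mu2_lt_L2 smooth [L2_le_L1 mu1_le_L2 mu1_ge0 _ mu2_alt].
case: L2 mu2_lt_L2 L2_le_L1 mu1_le_L2 mu2_alt smooth
  => [l2| |] // mu2_lt_l2 L2_le_L1 mu1_le_l2 mu2_alt;
  last by move: L2_le_L1; rewrite leye_eq => /eqP ->; rewrite ltxx; case.
move=> _; rewrite lte_fin in mu2_lt_l2; rewrite lee_fin in mu1_le_l2.
rewrite sigma1E sigma1pE; apply: certifiedC.
have mu1_range : 0 <= mu1 <= l2 by apply/andP.
case: mu2_alt => [mu2_ge0|[mu2_lt0 E_le0]].
  by apply: certified_sigma2 => //; [lra | left].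
have mu1_gt0 : 0 < mu1.
  by rewrite lt_def mu1_ge0 andbT; apply: contraTneq E_le0 => ->; rewrite /Ec eqxx.
by apply: certified_sigma2 => //; [lra | right; apply: sigma2_ge1_of_Ec_le0 => //; lra].
Qed.

Lemma certified_D2 mu1 mu2 L1 L2 : (mu1%:E < L1)%E -> (mu2%:E < L2)%E ->
  (L1 < +oo \/ L2 < +oo)%E -> D2 mu1 mu2 L1 L2 ->
  certified mu1 mu2 L1 L2 (sigma2 mu2 L1 L2) (sigma2p mu2 L1 L2).
Proof.
move=> mu1_lt_L1 mu2_lt_L2 smooth [L1_le_L2 mu2_le_L1 mu2_ge0 _ mu1_ge0].
case: L1 mu1_lt_L1 L1_le_L2 mu2_le_L1 smooth => [l1| |] // mu1_lt_l1 L1_le_L2 mu2_le_l1;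
  last by move: L1_le_L2; rewrite leye_eq => /eqP ->; rewrite ltxx; case.
move=> _; rewrite lte_fin in mu1_lt_l1; rewrite lee_fin in mu2_le_l1.
by apply: certified_sigma2 => //; [lra | apply/andP | left].
Qed.

Lemma certified_D3 mu1 mu2 L1 L2 : (mu1%:E < L1)%E -> 0 < mu1 + mu2 ->
  D3 mu1 mu2 L1 L2 -> certified mu1 mu2 L1 L2 (sigma3 mu1 mu2 L1 L2) (sigma3p mu2 L2).
Proof.
move=> mu1_lt_L1 mu_gt0 [mu2_lt0 mu1_gt0 mu1_lt_L2 _ [B_le0 _]].
have [{}B_le0 sp_ge0 cert2] := descent_cert_sigma3p mu1_gt0 mu2_lt0 mu_gt0 mu1_lt_L2 B_le0.
have [s_ge0 cert1] := descent_cert_sigma3 mu1_gt0 mu1_lt_L1 B_le0.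
set T := _ * mu1 ^+ 2 / _ in cert1 cert2.
by split=> //; exists (mu1 - T), (T - mu1); split=> //; lra.
Qed.

Lemma certified_D4 mu1 mu2 L1 L2 : (mu1%:E < L1)%E -> (mu2%:E < L2)%E ->
  0 < mu1 + mu2 -> D4 mu1 mu2 L1 L2 ->
  certified mu1 mu2 L1 L2 (@sigma4 R) (sigma4p mu1 mu2).
Proof.
move=> mu1_lt_L1 mu2_lt_L2 mu_gt0 [mu2_lt0 mu1_gt0 _ alt].
rewrite /sigma4 /sigma4p; set sp := (mu1 + mu2) / mu2 ^+ 2.
have mu2sq_gt0 : 0 < mu2 ^+ 2 by rewrite expr2 nmulr_rgt0.
have sp_ge0 : 0 <= sp by rewrite divr_ge0 // ltW.
have [l2 L2E sp_le] : exists2 l2, L2 = l2%:E & sp * (l2 + mu2) <= 1.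
  case: L2 mu2_lt_L2 alt => [l2| |] // mu2_lt_l2 alt; last first.
    have B_lt0 : mu1^-1 + mu2^-1 < 0.
      have -> : mu1^-1 + mu2^-1 = (mu1 + mu2) / (mu1 * mu2) by field_lra.
      by rewrite pmulr_rlt0 // invr_lt0 pmulr_rlt0.
    case: alt => [[B_gt0 _]|[B_gt0 _]|[_ //]];
      by move: B_gt0; rewrite /Bc /= addr0 lte_fin; lra.
  exists l2 => //; rewrite lte_fin in mu2_lt_l2.
  have [l2_gt0|l2_le0] := ltrP 0 l2; last first.
    have : l2 + mu2 <= 0 by lra.
    by move/(mulr_ge0_le0 sp_ge0); lra.
  have key : l2 * mu1 + l2 * mu2 + mu1 * mu2 < 0.
    rewrite ltNge -Bc_le0E // -ltNge.
    case: alt => [[B_gt0 _]|[B_gt0 _]|[_ L2_le0]] //.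
    by exfalso; move: L2_le0; rewrite lee_fin; lra.
  by rewrite /sp mulrAC ler_pdivrMr // mul1r; lra.
subst L2; rewrite lte_fin in mu2_lt_L2.
split=> //; exists mu1, (- mu1); split; last by lra.
  by apply: descent_cert_flat; rewrite ?mul0r ?lexx ?einv_shift_ge0.
have -> : - mu1 = mu2 - sp * mu2 ^+ 2 by rewrite /sp; field_lra.
apply: descent_cert_npos => //; first exact: ltW.
by rewrite /= ler_pdivlMr ?subr_gt0 //; lra.
Qed.

Lemma certified_D5 mu1 mu2 L1 L2 : (mu2%:E < L2)%E -> D5 mu1 mu2 L1 L2 ->
  certified mu1 mu2 L1 L2 (@sigma5 R) (sigma5p mu1 L2).
Proof.
move=> mu2_lt_L2 [mu1_lt_L1 L2_le_mu1 L2_gt0 _ mu2_alt].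
case: L2 mu2_lt_L2 L2_le_mu1 L2_gt0 mu2_alt => [l2| |] //;
  rewrite ?lte_fin ?lee_fin => mu2_lt_l2 l2_le_mu1 l2_gt0 mu2_alt.
apply: certifiedC; apply: certified_sigma6 => //; first by apply/andP.
case: mu2_alt => [mu2_ge0|[mu2_lt0 B_le0]]; first by nra.
by rewrite Bc_le0E // in B_le0; [lra | apply: lt_le_trans l2_le_mu1].
Qed.

Lemma certified_D6 mu1 mu2 L1 L2 : D6 mu1 mu2 L1 L2 ->
  certified mu1 mu2 L1 L2 (sigma6 mu2 L1) (@sigma6p R).
Proof.
case=> mu2_lt_L2 L1_le_mu2 mu1_lt_L1 mu1_ge0.
case: L1 L1_le_mu2 mu1_lt_L1 => [l1| |] //;
  rewrite ?lte_fin ?lee_fin => l1_le_mu2 mu1_lt_l1.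
by apply: certified_sigma6 => //; [apply/andP; split=> //; lra | nra].
Qed.

End Certificates.

Theorem theorem2 (R : realType) (d : nat) (mu1 mu2 : R) (L1 L2 : \bar R)
  (f1 f2 : 'rV[R]_d -> R) :
  inF mu1 L1 f1 -> inF mu2 L2 f2 ->
  0 <= mu1 ->
  (* F = f1 - f2 bounded below *)
  (exists m : R, forall w, m <= f1 w - f2 w) ->
  (* dom (subdiff f1) nonempty and contained in dom (subdiff f2) *)
  (exists w g, subdiff mu1 f1 w g) ->
  (forall w, (exists g, subdiff mu1 f1 w g) -> exists g, subdiff mu2 f2 w g) ->
  (* range (subdiff f2) contained in range (subdiff f1) *)
  (forall g, (exists w, subdiff mu2 f2 w g) -> exists w, subdiff mu1 f1 w g) ->
  (* at least one of f1, f2 is smooth *)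
  (L1 < +oo \/ L2 < +oo)%E ->
  (0 < mu1 + mu2 \/ (mu1 = 0 /\ mu2 = 0)) ->
  forall (x xp g1 g2 g2p : 'rV[R]_d),
  (* one DCA step: g2 in subdiff f2 (x), xp in argmin f1 - <g2, .> *)
  subdiff mu2 f2 x g2 ->
  (forall w, f1 xp - dotv g2 xp <= f1 w - dotv g2 w) ->
  (* arbitrary g1 in subdiff f1 (x) (so x in dom subdiff f1), g2p in subdiff f2 (xp);
     g1p := g2 *)
  subdiff mu1 f1 x g1 ->
  subdiff mu2 f2 xp g2p ->
  let g1p := g2 in
  let Fd := (f1 x - f2 x) - (f1 xp - f2 xp) in
  let bound (s sp : R) :=
    [/\ 0 <= s, 0 <= sp &
        s * 2^-1 * sqnorm (g1 - g2) + sp * 2^-1 * sqnorm (g1p - g2p) <= Fd] in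
  (D1 mu1 mu2 L1 L2 -> bound (sigma1 mu1 L1 L2) (sigma1p mu1 L1 L2)) /\
  (D2 mu1 mu2 L1 L2 -> bound (sigma2 mu2 L1 L2) (sigma2p mu2 L1 L2)) /\
  (D3 mu1 mu2 L1 L2 -> bound (sigma3 mu1 mu2 L1 L2) (sigma3p mu2 L2)) /\
  (D4 mu1 mu2 L1 L2 -> bound (@sigma4 R) (sigma4p mu1 mu2)) /\
  (D5 mu1 mu2 L1 L2 -> bound (@sigma5 R) (sigma5p mu1 L2)) /\
  (D6 mu1 mu2 L1 L2 -> bound (sigma6 mu2 L1) (@sigma6p R)).
Proof.
(* Boundedness of F and the domain and range inclusions only make the DCA
   iteration well defined; a single step does not need them. *)
move=> f1F f2F _ _ _ _ _ smooth mu_sign x xp g1 g2 g2p sub2x argmin sub1x sub2xp.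
move=> g1p Fd bound.
have sub1xp := subdiff_of_argmin f1F argmin.
have [[_ _ mu1_lt_L1 _] [_ _ mu2_lt_L2 _]] := (f1F, f2F).
have step s sp : certified mu1 mu2 L1 L2 s sp -> bound s sp.
  move=> cert; have [s_ge0 sp_ge0 _] := cert.
  by split=> //; apply: certified_dca_step cert.
have mu_gt0 : 0 < mu1 -> 0 < mu1 + mu2.
  by case: mu_sign => // -[-> _]; rewrite ltxx.
split; first by move=> D; apply/step/certified_D1.
split; first by move=> D; apply/step/certified_D2.
split; first by move=> D; apply/step/certified_D3 => //; apply: mu_gt0; case: D.
split; first by move=> D; apply/step/certified_D4 => //; apply: mu_gt0; case: D.
split; first by move=> D; apply/step/certified_D5.
by move=> D; apply/step/certified_D6.
Qed.
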